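(* Let $\mathcal{G}$ be an undirected connected weighted graph on $\{1,\dots,n\}$ with Laplacian $L$, let $A_i\in\mathbb{R}^{p\times d_i}$ for $i=1,\dots,n$ be such that $A=[A_1,\dots,A_n]$ has full row rank, and let $\mathbf{A}=\mathrm{diag}(A_1,\dots,A_n)$ and $\mathbf{L}=L\otimes I_p$. Then for every constant $c>0$, $\mathbf{A}\mathbf{A}^\top+c\mathbf{L}\succ0$.
   Context: The graph has symmetric adjacency matrix $[a_{ij}]$ with $a_{ij}\ge0$ ($a_{ij}>0$ iff $i$ and $j$ are neighbors), and Laplacian $L=\mathrm{diag}(\sum_j a_{ij})_i-[a_{ij}]$; connected means there is a path between any two vertices. $\mathbf{A}=\mathrm{diag}(A_1,\dots,A_n)$ is the block-diagonal matrix in $\mathbb{R}^{np\times\sum_i d_i}$. *)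

From HB Require Import structures.
From mathcomp Require Import all_boot all_order all_algebra.
Set Implicit Arguments. Unset Strict Implicit. Unset Printing Implicit Defensive.
Import Order.TTheory GRing.Theory Num.Theory.
Local Open Scope ring_scope.

Definition adjacency {R : realFieldType} {n : nat} (a : 'M[R]_n) : Prop :=
  a^T = a /\ forall i j, 0 <= a i j.

Definition connected_graph {R : realFieldType} {n : nat} (a : 'M[R]_n) : Prop :=
  forall i j : 'I_n, connect (fun k l => 0 < a k l) i j.

Definition laplacian {R : realFieldType} {n : nat} (a : 'M[R]_n) : 'M[R]_n :=
  \matrix_(i, j) ((i == j)%:R * (\sum_k a i k) - a i j).

Definition kron_eye {R : realFieldType} {n : nat} (p : nat) (L : 'M[R]_n)
  : 'M[R]_(\sum_(i < n) p) :=
  \mxblock_(i < n, j < n) ((L i j)%:M : 'M[R]_p).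

Definition blkdiag {R : realFieldType} {n p : nat} {d : 'I_n -> nat}
  (A : forall i : 'I_n, 'M[R]_(p, d i)) : 'M[R]_(\sum_(i < n) p, \sum_(i < n) d i) :=
  \mxblock_(i < n, j < n) (if i == j then A j else 0 : 'M[R]_(p, d j)).

Definition hcat {R : realFieldType} {n p : nat} {d : 'I_n -> nat}
  (A : forall i : 'I_n, 'M[R]_(p, d i)) : 'M[R]_(p, \sum_(i < n) d i) :=
  \mxrow_(j < n) A j.

Definition posdef {R : realFieldType} {m : nat} (M : 'M[R]_m) : Prop :=
  M^T = M /\ forall x : 'cV[R]_m, x != 0 -> 0 < (x^T *m M *m x) 0 0.

From HB Require Import structures.
From mathcomp Require Import all_boot all_order all_algebra ring.
Import Order.TTheory GRing.Theory Num.Theory.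
Local Open Scope ring_scope.

(* For x = (x_1, ..., x_n) the quadratic form of A A^T + c L (x) I_p is
   |A^T x|^2 + (c/2) sum_ij a_ij |x_i - x_j|^2, a sum of two nonnegative
   terms.  If it vanishes, the second term forces x_i = x_j along every edge,
   so by connectivity all blocks equal one vector y; the first term then gives
   A_i^T y = 0 for every i, i.e. [A_1, ..., A_n]^T y = 0, and y = 0 because
   [A_1, ..., A_n] has full row rank. *)

Lemma trmx_mul_free_eq0 {F : fieldType} {m k : nat} (M : 'M[F]_(m, k)) (y : 'cV_m) :
  row_free M -> (M^T *m y == 0) = (y == 0).
Proof. by move=> M_free; rewrite -trmx_eq0 trmx_mul trmxK mulmx_free_eq0 ?trmx_eq0. Qed.

Section QuadraticForms.
Context {R : realFieldType} {m : nat}.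

Lemma dotmx_ge0 (v : 'cV[R]_m) : 0 <= (v^T *m v) 0 0.
Proof. by rewrite mxE; apply: sumr_ge0 => k _; rewrite mxE -expr2 sqr_ge0. Qed.

Lemma dotmx_eq0 (v : 'cV[R]_m) : ((v^T *m v) 0 0 == 0) = (v == 0).
Proof.
apply/idP/eqP => [|->]; last by rewrite mulmx0 mxE.
rewrite mxE psumr_eq0 => [/allP v0|k _]; last by rewrite mxE -expr2 sqr_ge0.
apply/matrixP => k j; rewrite (ord1 j) mxE.
by have /= := v0 k (mem_index_enum k); rewrite mxE -expr2 sqrf_eq0 => /eqP.
Qed.

Lemma dotmxC (u v : 'cV[R]_m) : (u^T *m v) 0 0 = (v^T *m u) 0 0.
Proof. by rewrite -[in RHS](trmxK u) -trmx_mul [in RHS]mxE. Qed.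

Lemma dotmxB (u v : 'cV[R]_m) :
  ((u - v)^T *m (u - v)) 0 0 =
  (u^T *m u) 0 0 + (v^T *m v) 0 0 - (u^T *m v) 0 0 *+ 2.
Proof.
rewrite !mxE -big_split -sumrMnl -sumrB /=.
by apply: eq_bigr => k _; rewrite !mxE; ring.
Qed.

Lemma quad_mulmx_tr k (M : 'M[R]_(m, k)) (x : 'cV_m) :
  x^T *m (M *m M^T) *m x = (M^T *m x)^T *m (M^T *m x).
Proof. by rewrite trmx_mul trmxK !mulmxA. Qed.

End QuadraticForms.

Section BlockMatrices.
Context {R : realFieldType} {n p : nat}.

Lemma mulmx_tr_blkdiag (d : 'I_n -> nat) (A : forall i, 'M[R]_(p, d i))
    (x : 'cV_(\sum_(i < n) p)) :
  (blkdiag A)^T *m x = \mxcol_i ((A i)^T *m submxcol x i).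
Proof.
apply: trmx_inj; rewrite trmx_mul trmxK tr_mxcol -[x]submxcolK tr_mxcol.
rewrite /blkdiag mul_mxrow_mxblock; apply: eq_mxrow => j.
rewrite (bigD1 j) //= eqxx big1 ?addr0 ?mxcolK ?trmx_mul ?trmxK // => i /negbTE ->.
by rewrite mulmx0.
Qed.

Lemma tr_hcat_mul (d : 'I_n -> nat) (A : forall i, 'M[R]_(p, d i)) (y : 'cV_p) :
  (hcat A)^T *m y = \mxcol_i ((A i)^T *m y).
Proof. by rewrite /hcat tr_mxrow mxcol_mul. Qed.

Lemma tr_kron_eye (L : 'M[R]_n) : (kron_eye p L)^T = kron_eye p L^T.
Proof.
by rewrite /kron_eye tr_mxblock; apply: eq_mxblock => i j; rewrite tr_scalar_mx mxE.
Qed.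

Lemma kron_eye_quad (L : 'M[R]_n) (x : 'cV_(\sum_(i < n) p)) :
  (x^T *m kron_eye p L *m x) 0 0 =
  \sum_i \sum_j L i j * ((submxcol x i)^T *m submxcol x j) 0 0.
Proof.
rewrite -[x]submxcolK tr_mxcol /kron_eye mul_mxrow_mxblock mul_mxrow_mxcol.
rewrite summxE exchange_big /=; apply: eq_bigr => j _.
rewrite mulmx_suml summxE; apply: eq_bigr => i _.
by rewrite !mxcolK mul_mx_scalar -scalemxAl mxE.
Qed.

End BlockMatrices.

Section Laplacian.
Context {R : realFieldType} {n p : nat} {a : 'M[R]_n}.
Hypothesis a_sym : a^T = a.

Let aC i j : a j i = a i j.
Proof. by rewrite -{1}a_sym mxE. Qed.

Lemma tr_laplacian : (laplacian a)^T = laplacian a.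
Proof.
apply/matrixP => i j; rewrite !mxE aC eq_sym.
by case: eqVneq => [->|_]; rewrite ?mul0r.
Qed.

Lemma laplacian_form (b : 'I_n -> 'I_n -> R) : (forall i j, b j i = b i j) ->
  (\sum_i \sum_j laplacian a i j * b i j) *+ 2 =
  \sum_i \sum_j a i j * (b i i + b j j - b i j *+ 2).
Proof.
move=> bC; have row i : \sum_j laplacian a i j * b i j = \sum_j a i j * (b i i - b i j).
  under eq_bigr do rewrite mxE mulrBl.
  rewrite sumrB (bigD1 i) //= [X in _ + X - _]big1 => [|j /negbTE ne]; last first.
    by rewrite eq_sym ne !mul0r.
  rewrite eqxx mul1r addr0 mulr_suml -sumrB.
  by apply: eq_bigr => j _; rewrite mulrBr.
rewrite (eq_bigr _ (fun i _ => row i)) mulr2n {2}exchange_big -big_split /=.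
apply: eq_bigr => i _; rewrite -big_split /=; apply: eq_bigr => j _.
by rewrite aC bC; ring.
Qed.

Lemma kron_laplacian_quad (x : 'cV[R]_(\sum_(i < n) p)) :
  (x^T *m kron_eye p (laplacian a) *m x) 0 0 *+ 2 =
  \sum_i \sum_j a i j *
    ((submxcol x i - submxcol x j)^T *m (submxcol x i - submxcol x j)) 0 0.
Proof.
rewrite kron_eye_quad laplacian_form => [|i j]; last exact: dotmxC.
apply: eq_bigr => i _; apply: eq_bigr => j _; congr (_ * _).
by rewrite dotmxB.
Qed.

Hypothesis a_ge0 : forall i j, 0 <= a i j.

Lemma kron_laplacian_quad_ge0 (x : 'cV[R]_(\sum_(i < n) p)) :
  0 <= (x^T *m kron_eye p (laplacian a) *m x) 0 0.
Proof.
rewrite -(pmulrn_lge0 _ (isT : 0 < 2)%N) kron_laplacian_quad.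
by do 2![apply: sumr_ge0 => ? _]; rewrite mulr_ge0 ?dotmx_ge0.
Qed.

Lemma kron_laplacian_quad_eq0_edge (x : 'cV[R]_(\sum_(i < n) p)) i j :
  (x^T *m kron_eye p (laplacian a) *m x) 0 0 = 0 -> 0 < a i j ->
  submxcol x i = submxcol x j.
Proof.
move=> q0 aij; set X := submxcol x.
pose t k l := a k l * ((X k - X l)^T *m (X k - X l)) 0 0.
have t_ge0 k l : 0 <= t k l by rewrite mulr_ge0 ?dotmx_ge0.
have : \sum_k \sum_l t k l = 0 by rewrite -kron_laplacian_quad q0 mul0rn.
move/psumr_eq0P => /(_ (fun k _ => sumr_ge0 _ (fun l _ => t_ge0 k l)) i isT).
move/psumr_eq0P => /(_ (fun l _ => t_ge0 i l) j isT) /eqP.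
by rewrite mulf_eq0 gt_eqF //= dotmx_eq0 subr_eq0 => /eqP.
Qed.

Hypothesis a_conn : connected_graph a.

Lemma kron_laplacian_quad_eq0_const (x : 'cV[R]_(\sum_(i < n) p)) i j :
  (x^T *m kron_eye p (laplacian a) *m x) 0 0 = 0 -> submxcol x i = submxcol x j.
Proof.
move=> q0.
have X_closed : closed (fun k l => 0 < a k l) [pred k | submxcol x k == submxcol x i].
  by move=> k l /(kron_laplacian_quad_eq0_edge _ _ _ q0) Xkl; rewrite !inE Xkl.
have := closed_connect X_closed (a_conn i j).
by rewrite !inE eqxx => /esym /eqP.
Qed.

End Laplacian.

Section CommonKernel.
Context {R : realFieldType} {n p : nat} {a : 'M[R]_n}.
Context {d : 'I_n -> nat} {A : forall i, 'M[R]_(p, d i)}.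
Hypotheses (a_sym : a^T = a) (a_ge0 : forall i j, 0 <= a i j).
Hypotheses (a_conn : connected_graph a) (A_free : row_free (hcat A)).

Lemma blkdiag_kron_laplacian_kernel (x : 'cV[R]_(\sum_(i < n) p)) :
  (blkdiag A)^T *m x = 0 -> (x^T *m kron_eye p (laplacian a) *m x) 0 0 = 0 ->
  x = 0.
Proof.
move=> Bx0 q0; rewrite -[x]submxcolK -(mxcol0 (V:=R) (p_:=fun=> p) 1).
apply: eq_mxcol => i; apply/eqP; rewrite -(trmx_mul_free_eq0 _ _ A_free).
rewrite tr_hcat_mul -Bx0 mulmx_tr_blkdiag; apply/eqP/eq_mxcol => j.
by rewrite (kron_laplacian_quad_eq0_const a_sym a_ge0 a_conn x i j q0).
Qed.

End CommonKernel.

Theorem lemma6 (R : realFieldType) (n p : nat) (a : 'M[R]_n)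
  (d : 'I_n -> nat) (A : forall i : 'I_n, 'M[R]_(p, d i)) :
  adjacency a -> connected_graph a ->
  \rank (hcat A) = p ->
  forall c : R, 0 < c ->
  posdef (blkdiag A *m (blkdiag A)^T + c *: kron_eye p (laplacian a)).
Proof.
move=> [a_sym a_ge0] a_conn rkA c c_gt0; split.
  by rewrite raddfD /= linearZ /= trmx_mul trmxK tr_kron_eye tr_laplacian.
move=> x x_neq0; have A_free : row_free (hcat A) by rewrite /row_free rkA.
rewrite mulmxDr mulmxDl -scalemxAr -scalemxAl [X in 0 < X]mxE [X in _ + X]mxE.
rewrite quad_mulmx_tr.
have cq_ge0 := mulr_ge0 (ltW c_gt0) (kron_laplacian_quad_ge0 a_sym a_ge0 x).
have B_ge0 := dotmx_ge0 ((blkdiag A)^T *m x).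
rewrite lt0r addr_ge0 // andbT paddr_eq0 // mulf_eq0 (gt_eqF c_gt0) /= dotmx_eq0.
apply: contra x_neq0 => /andP[/eqP Bx0 /eqP q0]; apply/eqP.
exact: blkdiag_kron_laplacian_kernel a_sym a_ge0 a_conn A_free x Bx0 q0.
Qed.
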